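(* Suppose that the comparison equation $(-\Delta+V^0)\phi=0$ has a solution basis $\phi^\pm$ such that $\lim_{n \to \infty}\phi_n^- = 0$, $|\phi_n^+|$ is monotonically nondecreasing for sufficiently large $n$, and $\beta_n := (V_n - V^0_n)/W$ satisfies $\beta_n (1 + |\phi_n^+ \phi_n^-|^2) \in\ell^1$. Then for $N$ sufficiently large, ${\cal M}$ is a contraction on ${\cal B}_N$. Consequently, there exists a unique solution $\psi^-$ of $(-\Delta+V)\psi=0$ such that $\psi_n^- = a_n^+ \phi_n^+ + a_n^- \phi_n^-$, where $\lim_{n \to \infty}{a_n^+} = 0$ and $\lim_{n \to \infty}{a_n^-} = 1$. Moreover, if we define $\widehat{\psi}_n^- := \max_{m \ge n}{|\phi_m^-|}$, then $\psi_n^- = \phi_n^- + r_n \widehat{\psi}_n^-$, with $\lim_{n \to \infty}{r_n} = 0$.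
   Context: On the positive integers, $(\Delta f)_n = f_{n+1}+f_{n-1}-2f_n$, and one considers $(-\Delta+V)\psi=0$ and the comparison equation $(-\Delta+V^0)\phi=0$ with real potentials $V_n, V^0_n$. For independent solutions $\phi^\pm$ of the comparison equation, $W = \phi^-_n\phi^+_{n+1}-\phi^-_{n+1}\phi^+_n$ is their (constant) Wronskian and $\beta_n = (V_n-V^0_n)/W$. Solutions of $(-\Delta+V)\psi=0$ are written $\psi_n = a_n^+\phi_n^+ + a_n^-\phi_n^-$ with variable coefficients. The weighted Banach space is ${\cal B}_N=\{\mathbf{X}=(X^+_n,X^-_n)^T : \|\mathbf{X}\|_N := \sup_{n\ge N}(|(\phi^+_n)^2X^+_n|+|X^-_n|)<\infty\}$, and ${\cal M}$ is the linear operator $({\cal M}\mathbf{X})_n := \sum_{k=0}^\infty \beta_{n+k}\begin{pmatrix}\phi^+_{n+k}\phi^-_{n+k} & (\phi^-_{n+k})^2\\ -(\phi^+_{n+k})^2 & -\phi^+_{n+k}\phi^-_{n+k}\end{pmatrix}\mathbf{X}_{n+k}$; the coefficient vector $\mathbf{a}=(a^+_n,a^-_n)^T$ solves $\mathbf{a} = (0,1)^T - {\cal M}\mathbf{a}$. *)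

From Stdlib Require Import Reals Lra Lia.
From Coquelicot Require Import Coquelicot.
Open Scope R_scope.

(* Sequences are functions nat -> R; the equation is imposed at every
   positive integer n >= 1, the value at 0 playing the role of the boundary
   value needed by Delta at n = 1. *)

Definition Delta (f : nat -> R) (n : nat) : R :=
  f (S n) + f (pred n) - 2 * f n.

Definition is_sol (V : nat -> R) (psi : nat -> R) : Prop :=
  forall n : nat, (1 <= n)%nat -> - Delta psi n + V n * psi n = 0.

Definition Wr (phip phim : nat -> R) (n : nat) : R :=
  phim n * phip (S n) - phim (S n) * phip n.

Definition W (phip phim : nat -> R) : R := Wr phip phim 1.

Definition beta (V V0 phip phim : nat -> R) (n : nat) : R :=
  (V n - V0 n) / W phip phim.

Definition wt (phip : nat -> R) (Xp Xm : nat -> R) (n : nat) : R :=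
  Rabs ((phip n) ^ 2 * Xp n) + Rabs (Xm n).

Definition inB (phip : nat -> R) (N : nat) (Xp Xm : nat -> R) : Prop :=
  exists B : R, forall n : nat, (N <= n)%nat -> wt phip Xp Xm n <= B.

Definition normB (phip : nat -> R) (N : nat) (Xp Xm : nat -> R) : R :=
  real (Sup_seq (fun k => Finite (wt phip Xp Xm (N + k)%nat))).

Definition Mterm_p (V V0 phip phim Xp Xm : nat -> R) (n k : nat) : R :=
  beta V V0 phip phim (n + k)%nat *
    (phip (n + k)%nat * phim (n + k)%nat * Xp (n + k)%nat + (phim (n + k)%nat) ^ 2 * Xm (n + k)%nat).

Definition Mterm_m (V V0 phip phim Xp Xm : nat -> R) (n k : nat) : R :=
  beta V V0 phip phim (n + k)%nat *
    (- (phip (n + k)%nat) ^ 2 * Xp (n + k)%nat - phip (n + k)%nat * phim (n + k)%nat * Xm (n + k)%nat).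

Definition Mp (V V0 phip phim Xp Xm : nat -> R) (n : nat) : R :=
  Series (Mterm_p V V0 phip phim Xp Xm n).

Definition Mm (V V0 phip phim Xp Xm : nat -> R) (n : nat) : R :=
  Series (Mterm_m V V0 phip phim Xp Xm n).

(* M is a (well-defined) contraction on B_N: for X in B_N the defining
   series converge at every n >= N, M X lies in B_N, and
   ||M X||_N <= c ||X||_N for a fixed c < 1 (M is linear). *)
Definition is_contraction_on_B (V V0 phip phim : nat -> R) (N : nat) : Prop :=
  exists c : R, 0 <= c < 1 /\
    forall Xp Xm : nat -> R, inB phip N Xp Xm ->
      (forall n : nat, (N <= n)%nat ->
          ex_series (Mterm_p V V0 phip phim Xp Xm n) /\
          ex_series (Mterm_m V V0 phip phim Xp Xm n)) /\
      inB phip N (Mp V V0 phip phim Xp Xm) (Mm V V0 phip phim Xp Xm) /\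
      normB phip N (Mp V V0 phip phim Xp Xm) (Mm V V0 phip phim Xp Xm)
        <= c * normB phip N Xp Xm.

Definition fixed_eq (V V0 phip phim : nat -> R) (N : nat) (ap am : nat -> R) : Prop :=
  forall n : nat, (N <= n)%nat ->
    ap n = 0 - Mp V V0 phip phim ap am n /\
    am n = 1 - Mm V V0 phip phim ap am n.

Definition good_coeffs (V V0 phip phim psi : nat -> R) (N : nat) (ap am : nat -> R) : Prop :=
  inB phip N ap am /\
  fixed_eq V V0 phip phim N ap am /\
  (forall n : nat, (N <= n)%nat -> psi n = ap n * phip n + am n * phim n) /\
  is_lim_seq ap 0 /\ is_lim_seq am 1.

Definition hatpsi (phim : nat -> R) (n : nat) : R :=
  real (Sup_seq (fun k => Finite (Rabs (phim (n + k)%nat)))).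

From Stdlib Require Import Reals Lra Lia.
From Coquelicot Require Import Coquelicot.
Open Scope R_scope.

(* The first-order system a_{n+1} - a_n = beta_n psi_n (phi^-_n, -phi^+_n) for the
   coefficients of psi = a^+ phi^+ + a^- phi^- is equivalent to the difference equation
   (variation of constants), and summing it from infinity gives a = (0,1) - M a.  Writing
   the k-th summand of M X as beta_k (phi^-_k, -phi^+_k) (X^+_k phi^+_k + X^-_k phi^-_k),
   the weight (phi^+_n)^2 and the monotonicity of |phi^+| bound every summand by
   (3/2) ||X||_N |beta_k| (1 + |phi^+_k phi^-_k|^2); so M has norm at most
   3 sum_{k >= N} |beta_k| (1 + |phi^+_k phi^-_k|^2), which is below 1/2 for large N.
   Picard iteration gives the fixed point, and the same estimates on the tail of the
   series give a^+ -> 0, a^- -> 1 and, since |phi^-_k| <= hatpsi_n for k >= n,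
   |psi_n - phi^-_n| = O(hatpsi_n sum_{k >= n} |beta_k| (1 + |phi^+_k phi^-_k|^2)). *)

(** * Sequences and series *)

Lemma series_le_majorant (a c : nat -> R) :
  ex_series c -> (forall k, Rabs (a k) <= c k) -> ex_series a /\ Rabs (Series a) <= Series c.
Proof.
  intros Hc Hac.
  assert (Habs : ex_series (fun k => Rabs (a k))).
  { apply (@ex_series_le R_AbsRing R_CompleteNormedModule) with c; [|exact Hc].
    intro k. change (Rabs (Rabs (a k)) <= c k). rewrite Rabs_Rabsolu. apply Hac. }
  split; [now apply ex_series_Rabs|].
  apply Rle_trans with (1 := Series_Rabs a Habs).
  apply Series_le; [|exact Hc]. intro k. split; [apply Rabs_pos|apply Hac].
Qed.

Lemma is_lim_seq_dominated (u e : nat -> R) (l : R) (N : nat) :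
  is_lim_seq e 0 -> (forall n, (N <= n)%nat -> Rabs (u n - l) <= e n) -> is_lim_seq u l.
Proof.
  intros He Hue. apply is_lim_seq_spec. apply is_lim_seq_spec in He.
  intro eps. destruct (He eps) as [N' HN']. exists (max N N'). intros n Hn.
  specialize (HN' n ltac:(lia)). rewrite Rminus_0_r in HN'.
  apply Rle_lt_trans with (1 := Hue n ltac:(lia)). eapply Rle_lt_trans; [apply Rle_abs|exact HN'].
Qed.

Lemma is_lim_seq_scal_0 (c : R) (u : nat -> R) : is_lim_seq u 0 -> is_lim_seq (fun n => c * u n) 0.
Proof.
  intro Hu. replace (Finite 0) with (Rbar_mult c 0) by (simpl; f_equal; ring).
  now apply is_lim_seq_scal_l.
Qed.

Lemma is_lim_seq_half_pow (c : R) : is_lim_seq (fun j => c * (/2) ^ j) 0.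
Proof. apply is_lim_seq_scal_0, is_lim_seq_geom. rewrite Rabs_pos_eq; lra. Qed.

Lemma is_lim_seq_series_tail (a : nat -> R) :
  ex_series a -> is_lim_seq (fun n => Series (fun k => a (n + k)%nat)) 0.
Proof.
  intro Ha. apply is_lim_seq_incr_1.
  apply is_lim_seq_ext with (fun n => Series a - sum_n a n).
  { intro n. rewrite (Series_incr_n a (S n)), sum_n_Reals by (lia || exact Ha). simpl. ring. }
  replace (Finite 0) with (Finite (Series a - Series a)) by (f_equal; ring).
  apply is_lim_seq_minus'; [apply is_lim_seq_const|exact (Series_correct a Ha)].
Qed.

Lemma geometric_cauchy_head (u : nat -> R) (K q : R) : 0 <= q < 1 ->
  (forall j, Rabs (u (S j) - u j) <= K * q ^ j) ->
  exists l : R, is_lim_seq u l /\ Rabs (u O - l) <= K / (1 - q).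
Proof.
  intros Hq Hu. set (d j := u (S j) - u j).
  assert (Hgeom : ex_series (fun j => K * q ^ j)).
  { apply (@ex_series_scal_l R_AbsRing R_NormedModule K).
    apply ex_series_geom. rewrite Rabs_pos_eq; lra. }
  destruct (series_le_majorant d _ Hgeom Hu) as [Hd Hsum].
  assert (Hpartial : forall n, sum_n d n = u (S n) - u O).
  { induction n as [|n IH]; [rewrite sum_O; reflexivity|].
    rewrite sum_Sn, IH. unfold d, plus; simpl. ring. }
  exists (u O + Series d). split.
  - apply is_lim_seq_incr_1.
    apply is_lim_seq_ext with (fun n => u O + sum_n d n).
    { intro n. rewrite Hpartial. ring. }
    apply (is_lim_seq_plus' _ _ (u O) (Series d));
      [apply is_lim_seq_const|exact (Series_correct d Hd)].
  - rewrite Series_scal_l, Series_geom in Hsum by (rewrite Rabs_pos_eq; lra).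
    replace (u O - (u O + Series d)) with (- Series d) by ring.
    rewrite Rabs_Ropp. exact Hsum.
Qed.

Lemma geometric_cauchy (u : nat -> R) (K q : R) : 0 <= q < 1 ->
  (forall j, Rabs (u (S j) - u j) <= K * q ^ j) ->
  exists l : R, is_lim_seq u l /\ forall j, Rabs (u j - l) <= K * q ^ j / (1 - q).
Proof.
  intros Hq Hu. destruct (geometric_cauchy_head u K q Hq Hu) as [l [Hl _]].
  exists l. split; [exact Hl|]. intro j.
  destruct (geometric_cauchy_head (fun i => u (j + i)%nat) (K * q ^ j) q Hq) as [l' [Hl' Hj]].
  { intro i. replace (j + S i)%nat with (S (j + i)) by lia.
    rewrite Rmult_assoc, <- pow_add. apply Hu. }
  replace l with l'; [rewrite Nat.add_0_r in Hj; exact Hj|].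
  apply (is_lim_seq_incr_n u j) in Hl.
  apply (is_lim_seq_ext _ (fun i => u (j + i)%nat)) in Hl; [|intro; f_equal; lia].
  apply is_lim_seq_unique in Hl, Hl'. rewrite Hl in Hl'. now injection Hl'.
Qed.

Lemma Lim_seq_geometric (c : R) (u : nat -> R) (K q : R) : c <> 0 -> 0 <= q < 1 ->
  (forall j, Rabs (c * (u (S j) - u j)) <= K * q ^ j) ->
  is_lim_seq u (Lim_seq u) /\ forall j, Rabs (c * (u j - Lim_seq u)) <= K * q ^ j / (1 - q).
Proof.
  intros Hc Hq Hu.
  destruct (geometric_cauchy (fun j => c * u j) K q Hq) as [l [Hl Hle]].
  { intro j. rewrite <- Rmult_minus_distr_l. apply Hu. }
  assert (Hlim : is_lim_seq u (/ c * l)).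
  { apply is_lim_seq_ext with (fun j => / c * (c * u j)); [intro j; field; exact Hc|].
    now apply (is_lim_seq_scal_l _ (/ c) l). }
  rewrite (is_lim_seq_unique _ _ Hlim). split; [exact Hlim|].
  intro j. simpl. replace (c * (u j - / c * l)) with (c * u j - l) by (field; exact Hc). apply Hle.
Qed.

Lemma Sup_seq_finite (u : nat -> R) (B : R) : (forall k, u k <= B) ->
  exists s, Sup_seq (fun k => Finite (u k)) = Finite s /\ (forall k, u k <= s) /\ s <= B.
Proof.
  intro HB.
  assert (Hle : Rbar_le (Sup_seq (fun k => Finite (u k))) (Finite B)).
  { apply (proj2 (is_sup_seq_lub _ _ (Sup_seq_correct _))). intros x [n ->]. apply HB. }
  assert (Hge : forall k, Rbar_le (u k) (Sup_seq (fun k => Finite (u k)))).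
  { intro k. apply Sup_seq_minor_le with k. simpl. lra. }
  destruct (Sup_seq (fun k => Finite (u k))) as [s| |].
  - exists s. auto.
  - contradiction.
  - exact (False_ind _ (Hge O)).
Qed.

(** * The difference equation *)

Lemma is_sol_step (V f : nat -> R) (n : nat) :
  - Delta f (S n) + V (S n) * f (S n) = 0 <-> f (S (S n)) = (2 + V (S n)) * f (S n) - f n.
Proof. unfold Delta. simpl. split; intro; lra. Qed.

Lemma is_sol_extend (V : nat -> R) (N : nat) (f : nat -> R) :
  (forall n, (N < n)%nat -> - Delta f n + V n * f n = 0) ->
  exists psi, is_sol V psi /\ forall n, (N <= n)%nat -> psi n = f n.
Proof.
  revert f. induction N as [|N IH]; intros f Hf.
  - exists f. split; [intros n Hn; apply Hf; lia|auto].
  - set (g n := if Nat.eqb n N then (2 + V (S N)) * f (S N) - f (S (S N)) else f n).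
    assert (Hg : forall n, (N < n)%nat -> g n = f n).
    { intros n Hn. unfold g. now rewrite (proj2 (Nat.eqb_neq n N)) by lia. }
    destruct (IH g) as [psi [Hpsi Hpsig]].
    + intros [|n] Hn; [lia|]. apply is_sol_step.
      rewrite (Hg (S (S n))), (Hg (S n)) by lia.
      destruct (Nat.eq_dec n N) as [->|Hne].
      * unfold g. rewrite Nat.eqb_refl. ring.
      * rewrite Hg by lia. apply is_sol_step, Hf. lia.
    + exists psi. split; [exact Hpsi|]. intros n Hn. rewrite Hpsig, Hg by lia. reflexivity.
Qed.

Lemma is_sol_eq_from (V f g : nat -> R) (N : nat) : is_sol V f -> is_sol V g ->
  (forall n, (N <= n)%nat -> f n = g n) -> forall n, f n = g n.
Proof.
  intros Hf Hg. induction N as [|N IH]; intro Hfg; [intro n; apply Hfg; lia|].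
  apply IH. intros n Hn. destruct (Nat.eq_dec n N) as [->|]; [|apply Hfg; lia].
  pose proof (proj1 (is_sol_step V f N) (Hf (S N) ltac:(lia))) as Ef.
  pose proof (proj1 (is_sol_step V g N) (Hg (S N) ltac:(lia))) as Eg.
  rewrite (Hfg (S N)), (Hfg (S (S N))) in Ef by lia. lra.
Qed.

Lemma Wr_const (V0 f g : nat -> R) : is_sol V0 f -> is_sol V0 g -> forall n, Wr f g n = W f g.
Proof.
  intros Hf Hg.
  assert (Hstep : forall n, Wr f g (S n) = Wr f g n).
  { intro n. unfold Wr. rewrite (proj1 (is_sol_step V0 f n) (Hf (S n) ltac:(lia))),
      (proj1 (is_sol_step V0 g n) (Hg (S n) ltac:(lia))). ring. }
  unfold W. induction n as [|n IH]; [symmetry; apply Hstep|now rewrite Hstep].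
Qed.

Definition lincomb (ap am p m : nat -> R) (n : nat) : R := ap n * p n + am n * m n.

Lemma variation_of_constants (V V0 p m ap am : nat -> R) (N : nat) :
  is_sol V0 p -> is_sol V0 m -> W p m <> 0 ->
  (forall n, (N <= n)%nat ->
     ap (S n) = ap n + beta V V0 p m n * m n * lincomb ap am p m n /\
     am (S n) = am n - beta V V0 p m n * p n * lincomb ap am p m n) ->
  forall n, (N < n)%nat -> - Delta (lincomb ap am p m) n + V n * lincomb ap am p m n = 0.
Proof.
  intros Hp Hm HW Hstep [|n] Hn; [lia|]. apply is_sol_step.
  set (psi := lincomb ap am p m).
  destruct (Hstep n ltac:(lia)) as [Hap0 Ham0].
  destruct (Hstep (S n) ltac:(lia)) as [Hap1 Ham1].
  assert (Hback : psi n = ap (S n) * p n + am (S n) * m n).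
  { unfold psi, lincomb in *. rewrite Hap0, Ham0. ring. }
  assert (Hbeta : beta V V0 p m (S n) * W p m = V (S n) - V0 (S n)).
  { unfold beta. field. exact HW. }
  assert (Hfwd : psi (S (S n)) = ap (S n) * p (S (S n)) + am (S n) * m (S (S n))
                                 + (V (S n) - V0 (S n)) * psi (S n)).
  { rewrite <- Hbeta, <- (Wr_const V0 p m Hp Hm (S n)).
    unfold psi, lincomb in *. rewrite Hap1, Ham1. unfold Wr. ring. }
  rewrite Hfwd, Hback, (proj1 (is_sol_step V0 p n) (Hp (S n) ltac:(lia))),
    (proj1 (is_sol_step V0 m n) (Hm (S n) ltac:(lia))).
  unfold psi, lincomb. ring.
Qed.

(** * The weighted norm and the operator M *)

Lemma wt_nonneg (p Xp Xm : nat -> R) (n : nat) : 0 <= wt p Xp Xm n.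
Proof. unfold wt. pose proof (Rabs_pos (p n ^ 2 * Xp n)). pose proof (Rabs_pos (Xm n)). lra. Qed.

Lemma wt_sub_le (p Xp Xm Yp Ym : nat -> R) (n : nat) :
  wt p (fun k => Xp k - Yp k) (fun k => Xm k - Ym k) n <= wt p Xp Xm n + wt p Yp Ym n.
Proof.
  unfold wt. rewrite Rmult_minus_distr_l.
  pose proof (Rabs_triang (p n ^ 2 * Xp n) (- (p n ^ 2 * Yp n))).
  pose proof (Rabs_triang (Xm n) (- Ym n)). rewrite Rabs_Ropp in *. unfold Rminus. lra.
Qed.

Lemma wt_le_add (p Xp Xm Yp Ym : nat -> R) (n : nat) :
  wt p Xp Xm n <= wt p Yp Ym n + wt p (fun k => Yp k - Xp k) (fun k => Ym k - Xm k) n.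
Proof.
  unfold wt.
  pose proof (Rabs_triang (p n ^ 2 * Yp n) (- (p n ^ 2 * (Yp n - Xp n)))) as Hp.
  pose proof (Rabs_triang (Ym n) (- (Ym n - Xm n))) as Hm.
  rewrite Rabs_Ropp in Hp, Hm.
  replace (p n ^ 2 * Yp n + - (p n ^ 2 * (Yp n - Xp n))) with (p n ^ 2 * Xp n) in Hp by ring.
  replace (Ym n + - (Ym n - Xm n)) with (Xm n) in Hm by ring. lra.
Qed.

Lemma is_lim_seq_of_wt (p : nat -> R) (Xp Xm : nat -> nat -> R) (Yp Ym e : nat -> R) (n : nat) :
  p n <> 0 -> is_lim_seq e 0 ->
  (forall j, wt p (fun k => Xp j k - Yp k) (fun k => Xm j k - Ym k) n <= e j) ->
  is_lim_seq (fun j => Xp j n) (Yp n) /\ is_lim_seq (fun j => Xm j n) (Ym n).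
Proof.
  intros Hpn He Hwt. assert (Hp2 : 0 < p n ^ 2) by (apply pow2_gt_0; exact Hpn).
  split.
  - apply is_lim_seq_dominated with (N := O) (e := fun j => / p n ^ 2 * e j).
    { apply is_lim_seq_scal_0, He. }
  - intros j _. specialize (Hwt j). unfold wt in Hwt.
    pose proof (Rabs_pos (Xm j n - Ym n)).
    rewrite Rabs_mult, (Rabs_pos_eq (p n ^ 2)) in Hwt by lra.
    apply Rmult_le_reg_l with (p n ^ 2); [exact Hp2|].
    rewrite <- Rmult_assoc, Rinv_r, Rmult_1_l by lra. lra.
  - apply is_lim_seq_dominated with (N := O) (e := e); [exact He|].
    intros j _. specialize (Hwt j). unfold wt in Hwt.
    pose proof (Rabs_pos (p n ^ 2 * (Xp j n - Yp n))). lra.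
Qed.

Lemma wt_le_0 (p Xp Xm : nat -> R) (n : nat) :
  p n <> 0 -> wt p Xp Xm n <= 0 -> Xp n = 0 /\ Xm n = 0.
Proof.
  intros Hpn Hwt. unfold wt in Hwt.
  pose proof (Rabs_pos (p n ^ 2 * Xp n)). pose proof (Rabs_pos (Xm n)).
  assert (Hp : Rabs (p n ^ 2 * Xp n) = 0) by lra. assert (Hm : Rabs (Xm n) = 0) by lra.
  apply Rabs_eq_0 in Hp, Hm. split; [|exact Hm].
  destruct (Rmult_integral _ _ Hp) as [Hz|Hz]; [|exact Hz].
  exfalso. exact (pow_nonzero _ 2 Hpn Hz).
Qed.

Lemma one_plus_le_weight (x : R) :
  0 <= x -> 1 + x <= 3/2 * (1 + x ^ 2) /\ x * (1 + x) <= 3/2 * (1 + x ^ 2).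
Proof. intro Hx. pose proof (pow2_ge_0 (x - 1)). split; nra. Qed.

Lemma Rabs_mult3_le (b c y t u : R) :
  Rabs c <= t -> Rabs y <= u -> Rabs (b * c * y) <= Rabs b * t * u.
Proof.
  intros Hc Hy. rewrite !Rabs_mult.
  apply Rmult_le_compat; [|apply Rabs_pos| |exact Hy].
  - apply Rmult_le_pos; apply Rabs_pos.
  - apply Rmult_le_compat_l; [apply Rabs_pos|exact Hc].
Qed.

Definition beta_weight (V V0 p m : nat -> R) (k : nat) : R :=
  Rabs (beta V V0 p m k * (1 + Rabs (p k * m k) ^ 2)).

Definition beta_tail (V V0 p m : nat -> R) (n : nat) : R :=
  Series (fun k => beta_weight V V0 p m (n + k)%nat).

Section Operator.
Variables V V0 p m : nat -> R.

Lemma Mterm_p_lincomb (Xp Xm : nat -> R) (n k : nat) :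
  Mterm_p V V0 p m Xp Xm n k = beta V V0 p m (n + k) * m (n + k)%nat * lincomb Xp Xm p m (n + k).
Proof. unfold Mterm_p, lincomb. ring. Qed.

Lemma Mterm_m_lincomb (Xp Xm : nat -> R) (n k : nat) :
  Mterm_m V V0 p m Xp Xm n k =
    - (beta V V0 p m (n + k) * p (n + k)%nat * lincomb Xp Xm p m (n + k)).
Proof. unfold Mterm_m, lincomb. ring. Qed.

Lemma lincomb_scaled_le (c : R) (Xp Xm : nat -> R) (k : nat) : Rabs c <= Rabs (p k) ->
  Rabs (c * lincomb Xp Xm p m k) <= wt p Xp Xm k * (1 + Rabs (p k * m k)).
Proof.
  intro Hc. unfold lincomb, wt.
  apply Rle_trans with (Rabs (p k) * (Rabs (Xp k * p k) + Rabs (Xm k * m k))).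
  { rewrite Rabs_mult.
    apply Rmult_le_compat; [apply Rabs_pos|apply Rabs_pos|exact Hc|apply Rabs_triang]. }
  rewrite !Rabs_mult, <- RPow_abs.
  assert (0 <= Rabs (Xm k) + Rabs (p k) ^ 2 * Rabs (Xp k) * (Rabs (p k) * Rabs (m k))).
  { pose proof (Rabs_pos (p k)). pose proof (Rabs_pos (m k)).
    pose proof (Rabs_pos (Xp k)). pose proof (Rabs_pos (Xm k)).
    apply Rplus_le_le_0_compat; [lra|]. repeat apply Rmult_le_pos; try apply pow_le; lra. }
  nra.
Qed.

Section Bounds.
Variables (Xp Xm : nat -> R) (B : R) (n : nat).
Hypothesis Hmono : forall k, (n <= k)%nat -> Rabs (p n) <= Rabs (p k).
Hypothesis HB : forall k, (n <= k)%nat -> wt p Xp Xm k <= B.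

Let B_nonneg : 0 <= B.
Proof. apply Rle_trans with (1 := wt_nonneg p Xp Xm n). apply HB. lia. Qed.

Let lincomb_le (c : R) (k : nat) : Rabs c <= Rabs (p (n + k)%nat) ->
  Rabs (c * lincomb Xp Xm p m (n + k)) <= B * (1 + Rabs (p (n + k)%nat * m (n + k)%nat)).
Proof.
  intro Hc. apply Rle_trans with (1 := lincomb_scaled_le c Xp Xm (n + k) Hc).
  apply Rmult_le_compat_r; [pose proof (Rabs_pos (p (n + k)%nat * m (n + k)%nat)); lra|].
  apply HB. lia.
Qed.

Let beta_weight_eq (k : nat) : beta_weight V V0 p m k =
  Rabs (beta V V0 p m k) * (1 + Rabs (p k * m k) ^ 2).
Proof.
  unfold beta_weight. rewrite Rabs_mult, (Rabs_pos_eq (1 + _)); [reflexivity|].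
  pose proof (pow2_ge_0 (Rabs (p k * m k))). lra.
Qed.

Lemma Mterm_p_weighted_le (k : nat) :
  Rabs (p n ^ 2 * Mterm_p V V0 p m Xp Xm n k) <= 3/2 * B * beta_weight V V0 p m (n + k).
Proof.
  set (j := (n + k)%nat). rewrite Mterm_p_lincomb, beta_weight_eq. fold j.
  replace (p n ^ 2 * (beta V V0 p m j * m j * lincomb Xp Xm p m j))
    with (beta V V0 p m j * (p n * m j) * (p n * lincomb Xp Xm p m j)) by ring.
  assert (Hpm : Rabs (p n * m j) <= Rabs (p j * m j)).
  { rewrite !Rabs_mult. apply Rmult_le_compat_r; [apply Rabs_pos|apply Hmono; unfold j; lia]. }
  apply Rle_trans
    with (1 := Rabs_mult3_le _ _ _ _ _ Hpm (lincomb_le (p n) k (Hmono (n + k) ltac:(lia)))).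
  fold j. set (x := Rabs (p j * m j)). assert (Hx : 0 <= x) by apply Rabs_pos.
  destruct (one_plus_le_weight x Hx) as [_ Hw].
  assert (0 <= Rabs (beta V V0 p m j) * B) by (apply Rmult_le_pos; [apply Rabs_pos|lra]). nra.
Qed.

Lemma Mterm_m_le (k : nat) :
  Rabs (Mterm_m V V0 p m Xp Xm n k) <= 3/2 * B * beta_weight V V0 p m (n + k).
Proof.
  set (j := (n + k)%nat). rewrite Mterm_m_lincomb, beta_weight_eq, Rabs_Ropp. fold j.
  pose proof (lincomb_le (p j) k (Rle_refl _)) as Hu. fold j in Hu.
  set (x := Rabs (p j * m j)) in *. assert (Hx : 0 <= x) by apply Rabs_pos.
  destruct (one_plus_le_weight x Hx) as [Hw _].
  rewrite Rmult_assoc, Rabs_mult. pose proof (Rabs_pos (beta V V0 p m j)).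
  apply Rle_trans with (Rabs (beta V V0 p m j) * (B * (3/2 * (1 + x ^ 2)))); [|right; ring].
  apply Rmult_le_compat_l; [lra|]. apply Rle_trans with (1 := Hu). apply Rmult_le_compat_l; lra.
Qed.

Lemma Mterm_p_scaled_le (h : R) (k : nat) : Rabs (m (n + k)%nat) <= h ->
  Rabs (p n * Mterm_p V V0 p m Xp Xm n k) <= 3/2 * B * h * beta_weight V V0 p m (n + k).
Proof.
  intro Hh. set (j := (n + k)%nat) in *. rewrite Mterm_p_lincomb, beta_weight_eq. fold j.
  replace (p n * (beta V V0 p m j * m j * lincomb Xp Xm p m j))
    with (beta V V0 p m j * m j * (p n * lincomb Xp Xm p m j)) by ring.
  apply Rle_trans
    with (1 := Rabs_mult3_le _ _ _ _ _ Hh (lincomb_le (p n) k (Hmono (n + k) ltac:(lia)))).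
  fold j. set (x := Rabs (p j * m j)). assert (Hx : 0 <= x) by apply Rabs_pos.
  destruct (one_plus_le_weight x Hx) as [Hw _].
  assert (0 <= Rabs (beta V V0 p m j) * (B * h)).
  { pose proof (Rabs_pos (m j)). repeat apply Rmult_le_pos; [apply Rabs_pos|lra..]. }
  nra.
Qed.

Hypothesis Hsum : ex_series (beta_weight V V0 p m).

Let scaled_tail (c : R) :
  ex_series (fun k => c * beta_weight V V0 p m (n + k)) /\
  Series (fun k => c * beta_weight V V0 p m (n + k)) = c * beta_tail V V0 p m n.
Proof.
  split; [|apply Series_scal_l].
  apply (@ex_series_scal_l R_AbsRing R_NormedModule c). now apply ex_series_incr_n.
Qed.

Lemma Mm_le :
  ex_series (Mterm_m V V0 p m Xp Xm n) /\
  Rabs (Mm V V0 p m Xp Xm n) <= 3/2 * B * beta_tail V V0 p m n.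
Proof.
  destruct (scaled_tail (3/2 * B)) as [Hex Heq]. rewrite <- Heq.
  exact (series_le_majorant _ _ Hex Mterm_m_le).
Qed.

Lemma Mp_weighted_le : p n <> 0 ->
  ex_series (Mterm_p V V0 p m Xp Xm n) /\
  Rabs (p n ^ 2 * Mp V V0 p m Xp Xm n) <= 3/2 * B * beta_tail V V0 p m n.
Proof.
  intro Hpn. destruct (scaled_tail (3/2 * B)) as [Hex Heq]. rewrite <- Heq.
  destruct (series_le_majorant _ _ Hex Mterm_p_weighted_le) as [Hex' Hle].
  split.
  - apply (@ex_series_ext R_AbsRing R_NormedModule
      (fun k => / p n ^ 2 * (p n ^ 2 * Mterm_p V V0 p m Xp Xm n k))).
    { intro k. simpl. field. exact Hpn. }
    now apply (@ex_series_scal_l R_AbsRing R_NormedModule).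
  - unfold Mp. rewrite <- Series_scal_l. exact Hle.
Qed.

Lemma Mp_scaled_le (h : R) : (forall k, (n <= k)%nat -> Rabs (m k) <= h) ->
  Rabs (p n * Mp V V0 p m Xp Xm n) <= 3/2 * B * h * beta_tail V V0 p m n.
Proof.
  intro Hh. destruct (scaled_tail (3/2 * B * h)) as [Hex Heq]. rewrite <- Heq.
  unfold Mp. rewrite <- Series_scal_l.
  apply (series_le_majorant _ _ Hex). intro k. apply Mterm_p_scaled_le, Hh. lia.
Qed.
End Bounds.

Lemma M_sub (Xp Xm Yp Ym : nat -> R) (n : nat) :
  ex_series (Mterm_p V V0 p m Xp Xm n) -> ex_series (Mterm_m V V0 p m Xp Xm n) ->
  ex_series (Mterm_p V V0 p m Yp Ym n) -> ex_series (Mterm_m V V0 p m Yp Ym n) ->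
  Mp V V0 p m Xp Xm n - Mp V V0 p m Yp Ym n =
    Mp V V0 p m (fun k => Xp k - Yp k) (fun k => Xm k - Ym k) n /\
  Mm V V0 p m Xp Xm n - Mm V V0 p m Yp Ym n =
    Mm V V0 p m (fun k => Xp k - Yp k) (fun k => Xm k - Ym k) n.
Proof.
  intros HXp HXm HYp HYm. unfold Mp, Mm.
  split; rewrite <- Series_minus by assumption; apply Series_ext; intro k;
    [unfold Mterm_p|unfold Mterm_m]; ring.
Qed.

Lemma M_shift (Xp Xm : nat -> R) (n : nat) :
  ex_series (Mterm_p V V0 p m Xp Xm n) -> ex_series (Mterm_m V V0 p m Xp Xm n) ->
  Mp V V0 p m Xp Xm n = beta V V0 p m n * m n * lincomb Xp Xm p m n + Mp V V0 p m Xp Xm (S n) /\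
  Mm V V0 p m Xp Xm n = - (beta V V0 p m n * p n * lincomb Xp Xm p m n) + Mm V V0 p m Xp Xm (S n).
Proof.
  intros Hp Hm. unfold Mp, Mm. rewrite (Series_incr_1 _ Hp), (Series_incr_1 _ Hm).
  rewrite Mterm_p_lincomb, Mterm_m_lincomb, Nat.add_0_r.
  split; f_equal; apply Series_ext; intro k;
    [unfold Mterm_p|unfold Mterm_m]; now replace (n + S k)%nat with (S n + k)%nat by lia.
Qed.

End Operator.

(** * Contraction and fixed point *)

(* The bounds on M carry a factor 3/2 per component, so a tail <= 1/6 makes M
   contract by 1/2. *)
Definition admissible (V V0 p m : nat -> R) (N : nat) : Prop :=
  (forall n k, (N <= n)%nat -> (n <= k)%nat -> Rabs (p n) <= Rabs (p k)) /\
  (forall n, (N <= n)%nat -> p n <> 0) /\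
  (forall n, (N <= n)%nat -> beta_tail V V0 p m n <= 1/6).

Section Contraction.
Variables (V V0 p m : nat -> R) (N : nat).
Hypothesis Hsum : ex_series (beta_weight V V0 p m).
Hypothesis Hadm : admissible V V0 p m N.

Let mono_from (n : nat) : (N <= n)%nat -> forall k, (n <= k)%nat -> Rabs (p n) <= Rabs (p k).
Proof. intros Hn k. apply (proj1 Hadm _ _ Hn). Qed.

Let nonzero_from (n : nat) : (N <= n)%nat -> p n <> 0.
Proof. apply (proj1 (proj2 Hadm)). Qed.

Let tail_small (n : nat) : (N <= n)%nat -> beta_tail V V0 p m n <= 1/6.
Proof. apply (proj2 (proj2 Hadm)). Qed.

Lemma M_half (Xp Xm : nat -> R) (B : R) :
  (forall n, (N <= n)%nat -> wt p Xp Xm n <= B) -> forall n, (N <= n)%nat ->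
  ex_series (Mterm_p V V0 p m Xp Xm n) /\ ex_series (Mterm_m V V0 p m Xp Xm n) /\
  wt p (Mp V V0 p m Xp Xm) (Mm V V0 p m Xp Xm) n <= B / 2.
Proof.
  intros HB n Hn.
  assert (HBn : forall k, (n <= k)%nat -> wt p Xp Xm k <= B) by (intros k Hk; apply HB; lia).
  destruct (Mp_weighted_le V V0 p m Xp Xm B n (mono_from n Hn) HBn Hsum (nonzero_from n Hn))
    as [Hp Hpb].
  destruct (Mm_le V V0 p m Xp Xm B n HBn Hsum) as [Hm Hmb].
  assert (HB0 : 0 <= B) by (apply Rle_trans with (1 := wt_nonneg p Xp Xm n), HBn; lia).
  assert (3/2 * B * beta_tail V V0 p m n <= B / 4).
  { apply Rle_trans with (3/2 * B * (1/6)); [|lra].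
    apply Rmult_le_compat_l; [lra|exact (tail_small n Hn)]. }
  unfold wt. repeat split; auto. lra.
Qed.

Lemma contraction : is_contraction_on_B V V0 p m N.
Proof.
  exists (1/2). split; [lra|]. intros Xp Xm [B HB].
  destruct (Sup_seq_finite (fun k => wt p Xp Xm (N + k)%nat) B) as [s [Hs [Hub _]]].
  { intro k. apply HB. lia. }
  assert (HXs : forall n, (N <= n)%nat -> wt p Xp Xm n <= s).
  { intros n Hn. replace n with (N + (n - N))%nat by lia. apply Hub. }
  pose proof (M_half Xp Xm s HXs) as HM.
  destruct (Sup_seq_finite (fun k => wt p (Mp V V0 p m Xp Xm) (Mm V V0 p m Xp Xm) (N + k)%nat)
    (s / 2)) as [s' [Hs' [_ Hle]]].
  { intro k. apply HM. lia. }
  split; [intros n Hn; split; apply HM, Hn|].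
  split; [exists (s / 2); intros n Hn; apply HM, Hn|].
  unfold normB. rewrite Hs, Hs'. simpl. lra.
Qed.

Lemma wt_M_sub (Xp Xm Yp Ym : nat -> R) (BX BY : R) :
  (forall n, (N <= n)%nat -> wt p Xp Xm n <= BX) ->
  (forall n, (N <= n)%nat -> wt p Yp Ym n <= BY) ->
  forall n, (N <= n)%nat ->
  wt p (fun k => (0 - Mp V V0 p m Xp Xm k) - (0 - Mp V V0 p m Yp Ym k))
       (fun k => (1 - Mm V V0 p m Xp Xm k) - (1 - Mm V V0 p m Yp Ym k)) n =
  wt p (Mp V V0 p m (fun k => Xp k - Yp k) (fun k => Xm k - Ym k))
       (Mm V V0 p m (fun k => Xp k - Yp k) (fun k => Xm k - Ym k)) n.
Proof.
  intros HX HY n Hn.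
  destruct (M_half _ _ _ HX n Hn) as [HXp [HXm _]].
  destruct (M_half _ _ _ HY n Hn) as [HYp [HYm _]].
  destruct (M_sub V V0 p m Xp Xm Yp Ym n HXp HXm HYp HYm) as [Ep Em].
  unfold wt. rewrite <- Ep, <- Em.
  replace (p n ^ 2 * (0 - Mp V V0 p m Xp Xm n - (0 - Mp V V0 p m Yp Ym n)))
    with (- (p n ^ 2 * (Mp V V0 p m Xp Xm n - Mp V V0 p m Yp Ym n))) by ring.
  replace (1 - Mm V V0 p m Xp Xm n - (1 - Mm V V0 p m Yp Ym n))
    with (- (Mm V V0 p m Xp Xm n - Mm V V0 p m Yp Ym n)) by ring.
  now rewrite !Rabs_Ropp.
Qed.

Fixpoint picard (j : nat) : (nat -> R) * (nat -> R) :=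
  match j with
  | O => (fun _ => 0, fun _ => 1)
  | S j => (fun n => 0 - Mp V V0 p m (fst (picard j)) (snd (picard j)) n,
            fun n => 1 - Mm V V0 p m (fst (picard j)) (snd (picard j)) n)
  end.

Lemma picard_bounded (j : nat) :
  forall n, (N <= n)%nat -> wt p (fst (picard j)) (snd (picard j)) n <= 2.
Proof.
  induction j as [|j IH]; intros n Hn; unfold wt; cbn [picard fst snd].
  - rewrite Rmult_0_r, Rabs_R0, Rabs_R1. lra.
  - destruct (M_half _ _ _ IH n Hn) as [_ [_ HM]]. unfold wt in HM.
    replace (p n ^ 2 * (0 - Mp V V0 p m (fst (picard j)) (snd (picard j)) n))
      with (- (p n ^ 2 * Mp V V0 p m (fst (picard j)) (snd (picard j)) n)) by ring.
    pose proof (Rabs_triang 1 (- Mm V V0 p m (fst (picard j)) (snd (picard j)) n)).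
    rewrite Rabs_Ropp, Rabs_R1 in *. unfold Rminus. lra.
Qed.

Lemma picard_step (j : nat) : forall n, (N <= n)%nat ->
  wt p (fun k => fst (picard (S j)) k - fst (picard j) k)
       (fun k => snd (picard (S j)) k - snd (picard j) k) n <= (/2) ^ S j.
Proof.
  induction j as [|j IH]; intros n Hn.
  - assert (Hone : forall k, (N <= k)%nat -> wt p (fst (picard O)) (snd (picard O)) k <= 1).
    { intros k _. unfold wt. cbn [picard fst snd]. rewrite Rmult_0_r, Rabs_R0, Rabs_R1. lra. }
    destruct (M_half _ _ _ Hone n Hn) as [_ [_ HM]]. unfold wt in *. cbn [picard fst snd] in *.
    replace (0 - Mp V V0 p m (fun _ => 0) (fun _ => 1) n - 0)
      with (- Mp V V0 p m (fun _ => 0) (fun _ => 1) n) by ring.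
    replace (1 - Mm V V0 p m (fun _ => 0) (fun _ => 1) n - 1)
      with (- Mm V V0 p m (fun _ => 0) (fun _ => 1) n) by ring.
    rewrite Ropp_mult_distr_r_reverse, !Rabs_Ropp. lra.
  - change (wt p (fun k => (0 - Mp V V0 p m (fst (picard (S j))) (snd (picard (S j))) k)
                           - (0 - Mp V V0 p m (fst (picard j)) (snd (picard j)) k))
              (fun k => (1 - Mm V V0 p m (fst (picard (S j))) (snd (picard (S j))) k)
                           - (1 - Mm V V0 p m (fst (picard j)) (snd (picard j)) k)) n
            <= (/2) ^ S (S j)).
    rewrite (wt_M_sub _ _ _ _ 2 2 (picard_bounded (S j)) (picard_bounded j) n Hn).
    destruct (M_half _ _ _ IH n Hn) as [_ [_ HM]].
    simpl pow in *. lra.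
Qed.

Definition picard_lim_p (n : nat) : R := Lim_seq (fun j => fst (picard j) n).
Definition picard_lim_m (n : nat) : R := Lim_seq (fun j => snd (picard j) n).

Lemma picard_converges (n : nat) : (N <= n)%nat -> forall j,
  wt p (fun k => fst (picard j) k - picard_lim_p k) (fun k => snd (picard j) k - picard_lim_m k) n
    <= 2 * (/2) ^ j.
Proof.
  intros Hn j. assert (Hq : 0 <= /2 < 1) by lra.
  destruct (Lim_seq_geometric (p n ^ 2) (fun i => fst (picard i) n) (/2) (/2)
    (pow_nonzero _ 2 (nonzero_from n Hn)) Hq) as [_ Hp].
  { intro i. pose proof (picard_step i n Hn) as Hstep. unfold wt in Hstep.
    pose proof (Rabs_pos (snd (picard (S i)) n - snd (picard i) n)). simpl pow in *. lra. }
  destruct (Lim_seq_geometric 1 (fun i => snd (picard i) n) (/2) (/2) R1_neq_R0 Hq) as [_ Hm].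
  { intro i. pose proof (picard_step i n Hn) as Hstep. unfold wt in Hstep.
    pose proof (Rabs_pos (p n ^ 2 * (fst (picard (S i)) n - fst (picard i) n))).
    rewrite Rmult_1_l. simpl pow in *. lra. }
  specialize (Hp j). specialize (Hm j). rewrite Rmult_1_l in Hm.
  replace (/2 * (/2) ^ j / (1 - /2)) with ((/2) ^ j) in Hp, Hm by field.
  unfold wt, picard_lim_p, picard_lim_m. lra.
Qed.

Lemma picard_fixed_point : exists ap am : nat -> R,
  inB p N ap am /\ fixed_eq V V0 p m N ap am.
Proof.
  exists picard_lim_p, picard_lim_m.
  assert (Hbound : forall n, (N <= n)%nat -> wt p picard_lim_p picard_lim_m n <= 4).
  { intros n Hn.
    apply Rle_trans with (1 := wt_le_add p _ _ (fst (picard O)) (snd (picard O)) n).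
    pose proof (picard_bounded O n Hn). pose proof (picard_converges n Hn O). simpl pow in *. lra. }
  split; [exists 4; exact Hbound|]. intros n Hn.
  assert (Hconv : forall j,
    wt p (fun k => fst (picard (S j)) k - picard_lim_p k)
         (fun k => snd (picard (S j)) k - picard_lim_m k) n <= 1 * (/2) ^ j).
  { intro j. pose proof (picard_converges n Hn (S j)). simpl pow in *. lra. }
  assert (Hfix : forall j,
    wt p (fun k => fst (picard (S j)) k - (0 - Mp V V0 p m picard_lim_p picard_lim_m k))
         (fun k => snd (picard (S j)) k - (1 - Mm V V0 p m picard_lim_p picard_lim_m k)) n
      <= 1 * (/2) ^ j).
  { intro j. cbn [picard fst snd].
    rewrite (wt_M_sub _ _ _ _ 2 4 (picard_bounded j) Hbound n Hn).
    destruct (M_half _ _ _ (fun k Hk => picard_converges k Hk j) n Hn) as [_ [_ HM]]. lra. }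
  destruct (is_lim_seq_of_wt p _ _ _ _ _ n (nonzero_from n Hn) (is_lim_seq_half_pow 1) Hconv)
    as [Hp1 Hm1].
  destruct (is_lim_seq_of_wt p _ _ _ _ _ n (nonzero_from n Hn) (is_lim_seq_half_pow 1) Hfix)
    as [Hp2 Hm2].
  apply is_lim_seq_unique in Hp1, Hm1, Hp2, Hm2.
  rewrite Hp1 in Hp2. rewrite Hm1 in Hm2. split; congruence.
Qed.

Lemma fixed_eq_unique (Xp Xm Yp Ym : nat -> R) :
  inB p N Xp Xm -> inB p N Yp Ym ->
  fixed_eq V V0 p m N Xp Xm -> fixed_eq V V0 p m N Yp Ym ->
  forall n, (N <= n)%nat -> Xp n = Yp n /\ Xm n = Ym n.
Proof.
  intros [BX HX] [BY HY] FX FY.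
  pose (D := wt p (fun k => Xp k - Yp k) (fun k => Xm k - Ym k)).
  assert (HDM : forall n, (N <= n)%nat -> D n =
    wt p (Mp V V0 p m (fun k => Xp k - Yp k) (fun k => Xm k - Ym k))
         (Mm V V0 p m (fun k => Xp k - Yp k) (fun k => Xm k - Ym k)) n).
  { intros n Hn. rewrite <- (wt_M_sub _ _ _ _ _ _ HX HY n Hn).
    unfold D, wt. destruct (FX n Hn) as [-> ->]. destruct (FY n Hn) as [-> ->]. reflexivity. }
  destruct (Sup_seq_finite (fun k => D (N + k)%nat) (BX + BY)) as [s [Hs [Hub _]]].
  { intro k. apply Rle_trans with (1 := wt_sub_le p Xp Xm Yp Ym (N + k)).
    apply Rplus_le_compat; [apply HX|apply HY]; lia. }
  assert (HDs : forall n, (N <= n)%nat -> D n <= s).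
  { intros n Hn. replace n with (N + (n - N))%nat by lia. apply Hub. }
  destruct (Sup_seq_finite (fun k => D (N + k)%nat) (s / 2)) as [s' [Hs' [_ Hhalf]]].
  { intro k. rewrite HDM by lia. apply (M_half _ _ _ HDs). lia. }
  rewrite Hs in Hs'. injection Hs' as <-.
  intros n Hn.
  destruct (wt_le_0 p (fun k => Xp k - Yp k) (fun k => Xm k - Ym k) n (nonzero_from n Hn))
    as [Ep Em].
  { pose proof (HDs n Hn). pose proof (HDs N (le_n N)).
    pose proof (wt_nonneg p (fun k => Xp k - Yp k) (fun k => Xm k - Ym k) N). unfold D in *. lra. }
  split; lra.
Qed.

Section FixedPoint.
Variables (Xp Xm : nat -> R) (B : R).
Hypothesis HB : forall n, (N <= n)%nat -> wt p Xp Xm n <= B.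
Hypothesis Hfix : fixed_eq V V0 p m N Xp Xm.

Let bounded_from (n : nat) : (N <= n)%nat -> forall k, (n <= k)%nat -> wt p Xp Xm k <= B.
Proof. intros Hn k Hk. apply HB. lia. Qed.

Lemma fixed_point_increments (n : nat) : (N <= n)%nat ->
  Xp (S n) = Xp n + beta V V0 p m n * m n * lincomb Xp Xm p m n /\
  Xm (S n) = Xm n - beta V V0 p m n * p n * lincomb Xp Xm p m n.
Proof.
  intro Hn. destruct (M_half _ _ _ HB n Hn) as [Hp [Hm _]].
  destruct (M_shift V V0 p m Xp Xm n Hp Hm) as [Sp Sm].
  destruct (Hfix n Hn) as [F1 F2]. destruct (Hfix (S n) ltac:(lia)) as [F3 F4].
  split; lra.
Qed.

Lemma fixed_point_limits : is_lim_seq Xp 0 /\ is_lim_seq Xm 1.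
Proof.
  pose proof (is_lim_seq_series_tail _ Hsum) as Htail.
  assert (HpN : 0 < p N ^ 2) by apply (pow2_gt_0 _ (nonzero_from N (le_n N))).
  split.
  - apply is_lim_seq_dominated
      with (N := N) (e := fun n => 3/2 * B / p N ^ 2 * beta_tail V V0 p m n).
    { apply is_lim_seq_scal_0, Htail. }
    intros n Hn. rewrite (proj1 (Hfix n Hn)), Rminus_0_r, Rminus_0_l, Rabs_Ropp.
    destruct (Mp_weighted_le V V0 p m Xp Xm B n (mono_from n Hn) (bounded_from n Hn) Hsum
      (nonzero_from n Hn)) as [_ Hle].
    assert (Hsq : p N ^ 2 <= p n ^ 2).
    { pose proof (mono_from N (le_n N) n Hn). rewrite <- (pow2_abs (p N)), <- (pow2_abs (p n)).
      pose proof (Rabs_pos (p N)). nra. }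
    rewrite Rabs_mult, (Rabs_pos_eq (p n ^ 2)) in Hle by lra.
    apply Rmult_le_reg_l with (p N ^ 2); [exact HpN|].
    replace (p N ^ 2 * (3/2 * B / p N ^ 2 * beta_tail V V0 p m n))
      with (3/2 * B * beta_tail V V0 p m n) by (field; apply nonzero_from; lia).
    apply Rle_trans with (2 := Hle). apply Rmult_le_compat_r; [apply Rabs_pos|exact Hsq].
  - apply is_lim_seq_dominated with (N := N) (e := fun n => 3/2 * B * beta_tail V V0 p m n).
    { apply is_lim_seq_scal_0, Htail. }
    intros n Hn. rewrite (proj2 (Hfix n Hn)).
    replace (1 - Mm V V0 p m Xp Xm n - 1) with (- Mm V V0 p m Xp Xm n) by ring.
    rewrite Rabs_Ropp. apply (Mm_le V V0 p m Xp Xm B n (bounded_from n Hn) Hsum).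
Qed.

Lemma fixed_point_remainder (n : nat) (h : R) : (N <= n)%nat ->
  (forall k, (n <= k)%nat -> Rabs (m k) <= h) ->
  Rabs (lincomb Xp Xm p m n - m n) <= 3 * B * h * beta_tail V V0 p m n.
Proof.
  intros Hn Hh.
  pose proof (Mp_scaled_le V V0 p m Xp Xm B n (mono_from n Hn) (bounded_from n Hn) Hsum h Hh) as Hp.
  destruct (Mm_le V V0 p m Xp Xm B n (bounded_from n Hn) Hsum) as [_ Hm].
  unfold lincomb. destruct (Hfix n Hn) as [-> ->].
  replace ((0 - Mp V V0 p m Xp Xm n) * p n + (1 - Mm V V0 p m Xp Xm n) * m n - m n)
    with (- (p n * Mp V V0 p m Xp Xm n) + - (Mm V V0 p m Xp Xm n * m n)) by ring.
  apply Rle_trans with (1 := Rabs_triang _ _). rewrite !Rabs_Ropp, (Rabs_mult (Mm _ _ _ _ _ _ n)).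
  assert (Rabs (Mm V V0 p m Xp Xm n) * Rabs (m n) <= 3/2 * B * beta_tail V V0 p m n * h).
  { apply Rmult_le_compat; [apply Rabs_pos|apply Rabs_pos|exact Hm|apply Hh; lia]. }
  lra.
Qed.

End FixedPoint.
End Contraction.

(** * The solution psi^- *)

Lemma sol_no_double_zero (V0 f g : nat -> R) : is_sol V0 f -> is_sol V0 g -> W f g <> 0 ->
  forall n, (f n <> 0 \/ f (S n) <> 0) /\ (g n <> 0 \/ g (S n) <> 0).
Proof.
  intros Hf Hg HW n. pose proof (Wr_const V0 f g Hf Hg n) as Hn. unfold Wr in Hn.
  split; [destruct (Req_dec (f n) 0) as [E0|E0]|destruct (Req_dec (g n) 0) as [E0|E0]];
    auto; right; intro E1; apply HW; rewrite <- Hn, E0, E1; ring.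
Qed.

Lemma admissible_eventually (V V0 p m : nat -> R) :
  is_sol V0 p -> is_sol V0 m -> W p m <> 0 ->
  (exists n0, forall n k, (n0 <= n)%nat -> (n <= k)%nat -> Rabs (p n) <= Rabs (p k)) ->
  ex_series (beta_weight V V0 p m) ->
  exists N0, forall N, (N0 <= N)%nat -> admissible V V0 p m N.
Proof.
  intros Hp Hm HW [n0 Hmono] Hsum.
  assert (HN1 : exists N1, (n0 <= N1)%nat /\ p N1 <> 0).
  { destruct (proj1 (sol_no_double_zero V0 p m Hp Hm HW n0)) as [H0|H0];
      [exists n0|exists (S n0)]; split; auto. }
  destruct HN1 as [N1 [Hn0N1 HpN1]].
  pose proof (is_lim_seq_series_tail _ Hsum) as Htail. apply is_lim_seq_spec in Htail.
  destruct (Htail (mkposreal (1/6) ltac:(lra))) as [N2 HN2].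
  exists (max N1 N2). intros N HN. split; [|split].
  - intros n k Hn Hk. apply Hmono; lia.
  - intros n Hn Hz. pose proof (Hmono N1 n Hn0N1 ltac:(lia)) as Hle.
    rewrite Hz, Rabs_R0 in Hle. pose proof (Rabs_pos_lt _ HpN1). lra.
  - intros n Hn. specialize (HN2 n ltac:(lia)). cbn [pos] in HN2.
    rewrite Rminus_0_r in HN2. fold (beta_tail V V0 p m n) in HN2.
    pose proof (Rle_abs (beta_tail V V0 p m n)). lra.
Qed.

Section Envelope.
Variables (V0 p m : nat -> R).
Hypothesis Hlim : is_lim_seq m 0.

Lemma hatpsi_ge (n k : nat) : (n <= k)%nat -> Rabs (m k) <= hatpsi m n.
Proof.
  intro Hk.
  destruct (maj_by_pos m (exist _ 0 (proj1 (is_lim_seq_Reals m 0) Hlim))) as [M [_ HM]].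
  destruct (Sup_seq_finite (fun i => Rabs (m (n + i)%nat)) M) as [s [Hs [Hub _]]].
  { intro i. apply HM. }
  unfold hatpsi. rewrite Hs. simpl. replace k with (n + (k - n))%nat by lia. apply Hub.
Qed.

Lemma hatpsi_pos (n : nat) : is_sol V0 p -> is_sol V0 m -> W p m <> 0 -> 0 < hatpsi m n.
Proof.
  intros Hp Hm HW.
  destruct (proj2 (sol_no_double_zero V0 p m Hp Hm HW n)) as [Hz|Hz];
    (eapply Rlt_le_trans; [apply Rabs_pos_lt, Hz|apply hatpsi_ge; lia]).
Qed.

End Envelope.

Section Solution.
Variables V V0 p m : nat -> R.
Hypothesis Hsolp : is_sol V0 p.
Hypothesis Hsolm : is_sol V0 m.
Hypothesis Hbasis : W p m <> 0.
Hypothesis Hlim : is_lim_seq m 0.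
Hypothesis Hsum : ex_series (beta_weight V V0 p m).

Lemma good_coeffs_exist (N : nat) : admissible V V0 p m N ->
  exists psi ap am, is_sol V psi /\ good_coeffs V V0 p m psi N ap am.
Proof.
  intro Hadm. destruct (picard_fixed_point V V0 p m N Hsum Hadm) as [ap [am [[B HB] Hfix]]].
  destruct (is_sol_extend V N (lincomb ap am p m)) as [psi [Hsol Hagree]].
  { exact (variation_of_constants V V0 p m ap am N Hsolp Hsolm Hbasis
      (fixed_point_increments V V0 p m N Hsum Hadm ap am B HB Hfix)). }
  exists psi, ap, am. split; [exact Hsol|].
  destruct (fixed_point_limits V V0 p m N Hsum Hadm ap am B HB Hfix) as [Hp Hm].
  exact (conj (ex_intro _ B HB) (conj Hfix (conj Hagree (conj Hp Hm)))).
Qed.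

Lemma good_coeffs_unique (N0 : nat) : (forall N, (N0 <= N)%nat -> admissible V V0 p m N) ->
  forall psi psi' N N' ap am ap' am', is_sol V psi -> is_sol V psi' ->
  good_coeffs V V0 p m psi N ap am -> good_coeffs V V0 p m psi' N' ap' am' ->
  forall n, psi' n = psi n.
Proof.
  intros Hadm psi psi' N N' ap am ap' am' Hsol Hsol'
    [[B HB] [Hfix [Hpsi _]]] [[B' HB'] [Hfix' [Hpsi' _]]].
  set (M := max N0 (max N N')).
  apply (is_sol_eq_from V psi' psi M Hsol' Hsol). intros n Hn.
  destruct (fixed_eq_unique V V0 p m M Hsum (Hadm M ltac:(lia)) ap' am' ap am)
    with (n := n) as [Ep Em]; try exact Hn.
  - exists B'. intros k Hk. apply HB'. lia.
  - exists B. intros k Hk. apply HB. lia.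
  - intros k Hk. apply Hfix'. lia.
  - intros k Hk. apply Hfix. lia.
  - rewrite Hpsi', Hpsi, Ep, Em by lia. reflexivity.
Qed.

Lemma good_coeffs_remainder (N : nat) (psi ap am : nat -> R) : admissible V V0 p m N ->
  good_coeffs V V0 p m psi N ap am ->
  exists r, is_lim_seq r 0 /\ forall n, psi n = m n + r n * hatpsi m n.
Proof.
  intros Hadm [[B HB] [Hfix [Hpsi _]]].
  exists (fun n => (psi n - m n) / hatpsi m n). split.
  - apply is_lim_seq_dominated with (N := N) (e := fun n => 3 * B * beta_tail V V0 p m n).
    { apply is_lim_seq_scal_0, (is_lim_seq_series_tail _ Hsum). }
    intros n Hn. pose proof (hatpsi_pos V0 p m Hlim n Hsolp Hsolm Hbasis) as Hh.
    pose proof (fixed_point_remainder V V0 p m N Hsum Hadm ap am B HB Hfix n (hatpsi m n) Hn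
      (hatpsi_ge m Hlim n)) as Hr.
    rewrite Hpsi by exact Hn. unfold Rdiv.
    rewrite Rminus_0_r, Rabs_mult, Rabs_inv, (Rabs_pos_eq (hatpsi m n)) by lra.
    apply Rmult_le_reg_r with (hatpsi m n); [exact Hh|].
    rewrite Rmult_assoc, Rinv_l, Rmult_1_r by lra. unfold lincomb in Hr. lra.
  - intro n. pose proof (hatpsi_pos V0 p m Hlim n Hsolp Hsolm Hbasis). field. lra.
Qed.

End Solution.

Theorem theorem2 (V V0 phip phim : nat -> R)
  (Hsolp : is_sol V0 phip) (Hsolm : is_sol V0 phim)
  (Hbasis : W phip phim <> 0)
  (Hlim : is_lim_seq phim 0)
  (Hmono : exists n0 : nat, forall n m : nat, (n0 <= n)%nat -> (n <= m)%nat ->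
             Rabs (phip n) <= Rabs (phip m))
  (Hl1 : ex_series (fun n => Rabs (beta V V0 phip phim n *
                                    (1 + (Rabs (phip n * phim n)) ^ 2)))) :
  (exists N0 : nat, forall N : nat, (N0 <= N)%nat ->
      is_contraction_on_B V V0 phip phim N) /\
  (exists psi : nat -> R,
      is_sol V psi /\
      (exists (N : nat) (ap am : nat -> R), good_coeffs V V0 phip phim psi N ap am) /\
      (forall psi' : nat -> R, is_sol V psi' ->
         (exists (N : nat) (ap am : nat -> R), good_coeffs V V0 phip phim psi' N ap am) ->
         forall n : nat, psi' n = psi n) /\
      (exists r : nat -> R, is_lim_seq r 0 /\
         forall n : nat, (1 <= n)%nat -> psi n = phim n + r n * hatpsi phim n)).
Proof.
  destruct (admissible_eventually V V0 phip phim Hsolp Hsolm Hbasis Hmono Hl1) as [N0 HN0].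
  split; [exists N0; intros N HN; exact (contraction V V0 phip phim N Hl1 (HN0 N HN))|].
  destruct (good_coeffs_exist V V0 phip phim Hsolp Hsolm Hbasis Hl1 N0 (HN0 N0 (le_n N0)))
    as [psi [ap [am [Hsol Hgood]]]].
  exists psi. split; [exact Hsol|]. split; [exists N0, ap, am; exact Hgood|]. split.
  - intros psi' Hsol' [N' [ap' [am' Hgood']]].
    exact (good_coeffs_unique V V0 phip phim Hl1 N0 HN0 psi psi' N0 N' ap am ap' am'
      Hsol Hsol' Hgood Hgood').
  - destruct (good_coeffs_remainder V V0 phip phim Hsolp Hsolm Hbasis Hlim Hl1 N0 psi ap am
      (HN0 N0 (le_n N0)) Hgood) as [r [Hr Hpsi]].
    exists r. split; [exact Hr|]. intros n _. apply Hpsi.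
Qed.
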